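(* For any pair of jointly distributed finite-valued random variables $(X,Y)\sim p_{XY}$: (a) $\tilde C_W(Y\backslash X)=H(Q_Y^X)$; (b) $\tilde P_W(Y\backslash X)=H(Y|Q_Y^X)$; (c) $H(Y)=\tilde C_W(Y\backslash X)+\tilde P_W(Y\backslash X)=H(Q_Y^X)+H(Y|Q_Y^X)$; (d) $C_W(X;Y)\leq \tilde C_W(Y\backslash X)$.
   Context: For finite-valued random variables, $A-B-C$ means that $A$ and $C$ are conditionally independent given $B$. Optimizations below are over finite-valued random variables $Q$ jointly distributed with $(X,Y)$ (marginal of $(X,Y)$ fixed). Define $\tilde P_W(Y\backslash X)=\max\{H(Y|Q): X-Q-Y \text{ and } X-Y-Q\}$, $\tilde C_W(Y\backslash X)=\min\{H(Q): X-Q-Y \text{ and } X-Y-Q\}$, and Wyner's common information $C_W(X;Y)=\min\{I(XY;Q): X-Q-Y\}$, where $XY$ denotes the joint variable $(X,Y)$. Let $Q_Y^X=f(Y)$ with $f(y)=p_{X|Y}(\cdot|y)$ (a distribution on the alphabet of $X$), i.e. $Q_Y^X$ identifies values of $Y$ inducing the same conditional distribution of $X$. *)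

From HB Require Import structures.
From mathcomp Require Import all_boot all_order all_algebra.
From mathcomp Require Import classical_sets boolp reals exp.
Set Implicit Arguments. Unset Strict Implicit. Unset Printing Implicit Defensive.
Import Order.TTheory GRing.Theory Num.Theory.
Local Open Scope ring_scope.
Local Open Scope classical_set_scope.

Section InfoDefs.
Variable R : realType.

Definition is_dist (T : finType) (p : {ffun T -> R}) : Prop :=
  (forall t, 0 <= p t) /\ \sum_(t : T) p t = 1.

Definition pmf (T : finType) (U : eqType) (p : {ffun T -> R}) (f : T -> U)
  (u : U) : R := \sum_(t : T | f t == u) p t.

(* Shannon entropy (nats) of the random variable f; the sum ranges over the
   finite range of f, and 0 ln 0 = 0. *)
Definition ent (T : finType) (U : eqType) (p : {ffun T -> R}) (f : T -> U) : R :=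
  - \sum_(u <- undup [seq f t | t <- enum T]) pmf p f u * ln (pmf p f u).

Definition cent (T : finType) (U V : eqType) (p : {ffun T -> R})
  (f : T -> U) (g : T -> V) : R :=
  ent p (fun t => (f t, g t)) - ent p g.

Definition minf (T : finType) (U V : eqType) (p : {ffun T -> R})
  (f : T -> U) (g : T -> V) : R :=
  ent p f + ent p g - ent p (fun t => (f t, g t)).

(* Markov chain A - B - C : A and C conditionally independent given B,
   i.e. P(a,b,c) P(b) = P(a,b) P(b,c) for all a b c. *)
Definition markov (T : finType) (U V W : eqType) (p : {ffun T -> R})
  (a : T -> U) (b : T -> V) (c : T -> W) : Prop :=
  forall (x : U) (y : V) (z : W),
    pmf p (fun t => (a t, b t, c t)) (x, y, z) * pmf p b y =
    pmf p (fun t => (a t, b t)) (x, y) * pmf p (fun t => (b t, c t)) (y, z).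

Section Joint.
Variables (TX TY : finType).

Definition vX (TQ : finType) (t : TX * TY * TQ) : TX := t.1.1.
Definition vY (TQ : finType) (t : TX * TY * TQ) : TY := t.1.2.
Definition vXY (TQ : finType) (t : TX * TY * TQ) : TX * TY := t.1.
Definition vQ (TQ : finType) (t : TX * TY * TQ) : TQ := t.2.

Definition coupling (pXY : {ffun TX * TY -> R}) (TQ : finType)
  (p : {ffun TX * TY * TQ -> R}) : Prop :=
  is_dist p /\ forall xy, pmf p (@vXY TQ) xy = pXY xy.

Definition tP_set (pXY : {ffun TX * TY -> R}) : set R :=
  [set r | exists (TQ : finType) (p : {ffun TX * TY * TQ -> R}),
     [/\ coupling pXY p, markov p (@vX TQ) (@vQ TQ) (@vY TQ),
         markov p (@vX TQ) (@vY TQ) (@vQ TQ) & r = cent p (@vY TQ) (@vQ TQ)]].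

Definition tC_set (pXY : {ffun TX * TY -> R}) : set R :=
  [set r | exists (TQ : finType) (p : {ffun TX * TY * TQ -> R}),
     [/\ coupling pXY p, markov p (@vX TQ) (@vQ TQ) (@vY TQ),
         markov p (@vX TQ) (@vY TQ) (@vQ TQ) & r = ent p (@vQ TQ)]].

Definition CW_set (pXY : {ffun TX * TY -> R}) : set R :=
  [set r | exists (TQ : finType) (p : {ffun TX * TY * TQ -> R}),
     [/\ coupling pXY p, markov p (@vX TQ) (@vQ TQ) (@vY TQ)
       & r = minf p (@vXY TQ) (@vQ TQ)]].

Definition tPW (pXY : {ffun TX * TY -> R}) : R := sup (tP_set pXY).
Definition tCW (pXY : {ffun TX * TY -> R}) : R := inf (tC_set pXY).
Definition CW (pXY : {ffun TX * TY -> R}) : R := inf (CW_set pXY).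

(* Q_Y^X = f(Y), f(y) = p_{X|Y}(.|y) (with the MathComp convention
   x/0 = 0 on zero-probability y), as a random variable on TX * TY *)
Definition pY (pXY : {ffun TX * TY -> R}) (y : TY) : R :=
  pmf pXY (fun t : TX * TY => t.2) y.
Definition condX (pXY : {ffun TX * TY -> R}) (y : TY) : {ffun TX -> R} :=
  [ffun x => pXY (x, y) / pY pXY y].
Definition QYX (pXY : {ffun TX * TY -> R}) (t : TX * TY) : {ffun TX -> R} :=
  condX pXY t.2.
Definition rY (t : TX * TY) : TY := t.2.

End Joint.

Definition is_min (S : set R) (r : R) : Prop := S r /\ forall s, S s -> r <= s.
Definition is_max (S : set R) (r : R) : Prop := S r /\ forall s, S s -> s <= r.

End InfoDefs.

From HB Require Import structures.
From mathcomp Require Import all_boot all_order all_algebra.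
From mathcomp Require Import classical_sets boolp reals exp.
From mathcomp Require Import ring lra.
Set Implicit Arguments. Unset Strict Implicit. Unset Printing Implicit Defensive.
Import Order.TTheory GRing.Theory Num.Theory.
Local Open Scope ring_scope.

(* Under the two chains X - Q - Y and X - Y - Q, the conditional law of X
   given Y = y coincides with that of X given Q = q whenever (y, q) has
   positive probability, so Q_Y^X is almost surely a function of Q.  Hence
   H(Q_Y^X) <= H(Q) and, by submodularity of entropy, H(Y|Q) <= H(Y|Q_Y^X).
   Q_Y^X itself, being a function of Y that determines p_{X|Y}, satisfies
   both chains, so both bounds are attained.  Part (c) is the chain rule for
   the function Q_Y^X of Y, and (d) holds because Q_Y^X is also admissible for
   Wyner's problem, with I(XY; Q_Y^X) = H(Q_Y^X). *)

Lemma sum_eq_indicator (R : realType) (I : finType) (i : I) (F : I -> R) :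
  \sum_j (i == j)%:R * F j = F i.
Proof.
rewrite (bigD1 i) //= eqxx mul1r big1 ?addr0 // => j /negbTE.
by rewrite eq_sym => ->; rewrite mul0r.
Qed.

Lemma sum_pair (R : realType) (A B : finType) (F : A * B -> R) :
  \sum_t F t = \sum_a \sum_b F (a, b).
Proof. by rewrite pair_bigA; apply: eq_bigr => -[]. Qed.

Lemma divff_le1 (R : realType) (x : R) : x / x <= 1.
Proof. by have [->|/divff ->] := eqVneq x 0; rewrite ?mul0r. Qed.

Lemma ln_ratio_ge (R : realType) (x y u v : R) :
  0 < x -> 0 < y -> 0 < u -> 0 < v ->
  1 - x * y / (u * v) <= ln u + ln v - ln x - ln y.
Proof.
move=> x0 y0 u0 v0; set z := x * y / (u * v).
have z0 : 0 < z by rewrite divr_gt0 ?mulr_gt0.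
have lnz : ln z = ln x + ln y - (ln u + ln v).
  by rewrite ln_div ?posrE ?mulr_gt0 // !lnM ?posrE.
have : ln (1 + (z - 1)) <= z - 1 by apply: le_ln1Dx; lra.
rewrite addrC subrK lnz; lra.
Qed.

Section Pmf.
Variables (R : realType) (T : finType) (p : {ffun T -> R}).

Lemma pmfE (U : eqType) (f : T -> U) u :
  pmf p f u = \sum_t (f t == u)%:R * p t.
Proof.
by rewrite /pmf big_mkcond; apply: eq_bigr => t _; case: eqP; rewrite ?mul1r ?mul0r.
Qed.

Lemma eq_pmf (U V : eqType) (f : T -> U) (g : T -> V) u v :
  (forall t, (f t == u) = (g t == v)) -> pmf p f u = pmf p g v.
Proof. by move=> fg; rewrite !pmfE; apply: eq_bigr => t _; rewrite fg. Qed.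

Lemma pmf_pair_fun (U W : eqType) (f : T -> U) (h : U -> W) u w :
  pmf p (fun t => (f t, h (f t))) (u, w) = (h u == w)%:R * pmf p f u.
Proof.
rewrite !pmfE mulr_sumr; apply: eq_bigr => t _; rewrite xpair_eqE mulrA.
by case: (f t =P u) => [->|_]; rewrite /= ?mulr1 ?mulr0 ?mul0r.
Qed.

Lemma pmf_id u : pmf p id u = p u.
Proof.
rewrite pmfE; under eq_bigr => t _ do rewrite eq_sym.
exact: sum_eq_indicator.
Qed.

Lemma sum_undup_pmf (U : eqType) (f : T -> U) (G : U -> R) :
  \sum_(u <- undup [seq f t | t <- enum T]) pmf p f u * G u =
  \sum_t p t * G (f t).
Proof.
under eq_bigr => u _ do rewrite pmfE mulr_suml.
rewrite exchange_big /=; apply: eq_bigr => t _.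
have ft : f t \in undup [seq f t | t <- enum T].
  by rewrite mem_undup; apply/mapP; exists t; rewrite ?mem_enum.
rewrite (big_rem _ ft) /= eqxx mul1r big_seq big1 ?addr0 // => u.
rewrite mem_rem_uniq ?undup_uniq // inE => /andP[/negbTE ut _].
by rewrite eq_sym ut !mul0r.
Qed.

Lemma entE (U : eqType) (f : T -> U) :
  ent p f = - \sum_t p t * ln (pmf p f (f t)).
Proof. by rewrite /ent sum_undup_pmf. Qed.

Lemma eq_ent (U V : eqType) (a : T -> U) (b : T -> V) :
  (forall s s', a s = a s' <-> b s = b s') -> ent p a = ent p b.
Proof.
move=> ab; rewrite !entE; congr (- _); apply: eq_bigr => t _.
by congr (_ * ln _); apply: eq_pmf => s; apply/eqP/eqP => /ab.
Qed.

End Pmf.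

Section Push.
Variables (R : realType) (T T' : finType) (p : {ffun T -> R}) (phi : T -> T').

Definition push : {ffun T' -> R} := [ffun t' => pmf p phi t'].

Lemma pushE t' : push t' = pmf p phi t'.
Proof. exact: ffunE. Qed.

Lemma pmf_push (U : eqType) (G : T' -> U) u :
  pmf push G u = pmf p (fun t => G (phi t)) u.
Proof.
rewrite !pmfE; under eq_bigr => t' _ do rewrite pushE pmfE mulr_sumr.
rewrite exchange_big /=; apply: eq_bigr => t _.
under eq_bigr => t' _ do rewrite mulrCA.
by rewrite sum_eq_indicator.
Qed.

Lemma ent_push (U : eqType) (G : T' -> U) :
  ent push G = ent p (fun t => G (phi t)).
Proof.
rewrite !entE; congr (- _).
under eq_bigr => t' _ do rewrite pmf_push pushE pmfE mulr_suml.
rewrite exchange_big /=; apply: eq_bigr => t _.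
under eq_bigr => t' _ do rewrite -mulrA.
by rewrite sum_eq_indicator.
Qed.

Lemma sum_push : \sum_t' push t' = \sum_t p t.
Proof.
under eq_bigr => t' _ do rewrite pushE pmfE.
rewrite exchange_big /=; apply: eq_bigr => t _.
exact: (sum_eq_indicator (phi t) (fun=> p t)).
Qed.

Lemma pmf_comp (U : eqType) (G : T' -> U) u :
  pmf p (fun t => G (phi t)) u = \sum_t' (G t' == u)%:R * pmf p phi t'.
Proof. by rewrite -pmf_push pmfE; under eq_bigr => t' _ do rewrite pushE. Qed.

Lemma markov_push (U V W : eqType) (a : T' -> U) (b : T' -> V) (c : T' -> W) :
  markov p (fun t => a (phi t)) (fun t => b (phi t)) (fun t => c (phi t)) ->
  markov push a b c.
Proof. by move=> m x y z; rewrite !pmf_push; exact: m. Qed.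

End Push.

Section Entropy.
Variables (R : realType) (T : finType) (p : {ffun T -> R}).
Hypothesis p_ge0 : forall t, 0 <= p t.

Lemma pmf_ge0 (U : eqType) (f : T -> U) u : 0 <= pmf p f u.
Proof. exact: sumr_ge0. Qed.

Lemma le_pmf (U : eqType) (f : T -> U) t : p t <= pmf p f (f t).
Proof. by rewrite /pmf (bigD1 t) //= lerDl sumr_ge0. Qed.

Lemma pmf_gt0 (U : eqType) (f : T -> U) t : 0 < p t -> 0 < pmf p f (f t).
Proof. by move=> pt; apply: lt_le_trans pt (le_pmf f t). Qed.

Lemma push_ge0 (T' : finType) (phi : T -> T') t' : 0 <= push p phi t'.
Proof. by rewrite pushE pmf_ge0. Qed.

Lemma ent_le_determined (U V : eqType) (a : T -> U) (b : T -> V) :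
  (forall s s', 0 < p s -> 0 < p s' -> a s = a s' -> b s = b s') ->
  ent p b <= ent p a.
Proof.
move=> ab; rewrite !entE lerN2; apply: ler_sum => t _.
have [pt0|ptn0] := eqVneq (p t) 0; first by rewrite pt0 !mul0r.
have pt : 0 < p t by rewrite lt_def ptn0 p_ge0.
rewrite ler_wpM2l // ler_ln ?posrE ?pmf_gt0 // !pmfE.
apply: ler_sum => s _; case: eqP => [e|_]; last by rewrite mul0r mulr_ge0.
have [->|ps] := eqVneq (p s) 0; first by rewrite !mulr0.
by rewrite (ab s t) ?eqxx // lt_def ps p_ge0.
Qed.

Lemma markov_fun (U V W : eqType) (a : T -> U) (b : T -> V) (h : V -> W) :
  markov p a b (fun t => h (b t)).
Proof.
move=> x y z.
rewrite (pmf_pair_fun p (fun t => (a t, b t)) (fun v => h v.2)) pmf_pair_fun /=.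
by rewrite mulrCA mulrA.
Qed.

Lemma markov_cond_eq (U V W : eqType) (a : T -> U) (b : T -> V) (c : T -> W) x s :
  markov p a c b -> markov p a b c -> 0 < p s ->
  pmf p (fun t => (a t, b t)) (x, b s) / pmf p b (b s) =
  pmf p (fun t => (a t, c t)) (x, c s) / pmf p c (c s).
Proof.
move=> /(_ x (c s) (b s)) acb /(_ x (b s) (c s)) abc ps.
rewrite (@eq_pmf _ _ _ _ _ (fun t => (a t, c t, b t)) (fun t => (a t, b t, c t))
  (x, c s, b s) (x, b s, c s)) in acb; last by move=> t; rewrite !xpair_eqE andbAC.
rewrite (@eq_pmf _ _ _ _ _ (fun t => (c t, b t)) (fun t => (b t, c t))
  (c s, b s) (b s, c s)) in acb; last by move=> t; rewrite !xpair_eqE andbC.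
have nzb : pmf p b (b s) != 0 by rewrite gt_eqF ?pmf_gt0.
have nzc : pmf p c (c s) != 0 by rewrite gt_eqF ?pmf_gt0.
have nzbc : pmf p (fun t => (b t, c t)) (b s, c s) != 0 by rewrite gt_eqF ?pmf_gt0.
apply/eqP; rewrite eqr_div //; apply/eqP/(mulIf nzbc).
by rewrite mulrAC -abc [RHS]mulrAC -acb mulrAC.
Qed.

Section Submodularity.
Variables (A B C : eqType) (a : T -> A) (b : T -> B) (c : T -> C).

Local Notation ac := (fun t => (a t, c t)).
Local Notation bc := (fun t => (b t, c t)).
Local Notation abc := (fun t => (a t, b t, c t)).

Let D t := pmf p abc (a t, b t, c t) * pmf p c (c t).

Lemma cond_indicatorE s1 s2 t :
  ((a s1, c s1) == (a t, c t)) && ((b s2, c s2) == (b t, c t)) =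
  ((a t, b t, c t) == (a s1, b s2, c s1)) && (c s2 == c s1).
Proof.
apply/andP/andP => [[/eqP[-> ->] /eqP[-> e]]|[/eqP[-> -> ->] /eqP e]].
  by rewrite e !eqxx.
by rewrite e !eqxx.
Qed.

Lemma sum_cond_indicator_le s1 s2 :
  \sum_t ((a s1, c s1) == (a t, c t))%:R * ((b s2, c s2) == (b t, c t))%:R *
    (p t / D t) <= (c s2 == c s1)%:R / pmf p c (c s1).
Proof.
under eq_bigr => t _ do
  rewrite -natrM mulnb cond_indicatorE -mulnb natrM [_ * (c s2 == _)%:R]mulrC -mulrA.
rewrite -mulr_sumr ler_wpM2l //.
have -> : \sum_t ((a t, b t, c t) == (a s1, b s2, c s1))%:R * (p t / D t) =
    pmf p abc (a s1, b s2, c s1) / (pmf p abc (a s1, b s2, c s1) * pmf p c (c s1)).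
  rewrite {1}pmfE mulr_suml; apply: eq_bigr => t _.
  by case: eqP => [[ea eb ec]|_]; rewrite ?mul0r // /D ea eb ec mulrA.
rewrite invfM mulrA ler_piMl ?invr_ge0 ?pmf_ge0 //.
exact: divff_le1.
Qed.

(* The weights P(a,c) P(b,c) / P(c) of the conditionally independent law have
   total mass at most 1; with ln z <= z - 1 this gives submodularity. *)
Lemma sum_cond_product_le :
  \sum_t p t * (pmf p ac (a t, c t) * pmf p bc (b t, c t) / D t) <= \sum_t p t.
Proof.
have expand t : p t * (pmf p ac (a t, c t) * pmf p bc (b t, c t) / D t) =
    \sum_s1 \sum_s2 p s1 * p s2 * (((a s1, c s1) == (a t, c t))%:R *
      ((b s2, c s2) == (b t, c t))%:R * (p t / D t)).
  rewrite !pmfE big_distrlr mulr_suml mulr_sumr; apply: eq_bigr => s1 _.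
  rewrite mulr_suml mulr_sumr; apply: eq_bigr => s2 _ /=; ring.
under eq_bigr => t _ do rewrite expand.
rewrite exchange_big /=.
apply: (@le_trans _ _
  (\sum_s1 \sum_s2 p s1 * p s2 * ((c s2 == c s1)%:R / pmf p c (c s1)))).
  apply: ler_sum => s1 _; rewrite exchange_big /=; apply: ler_sum => s2 _.
  by rewrite -mulr_sumr ler_wpM2l ?mulr_ge0 ?sum_cond_indicator_le.
apply: ler_sum => s1 _; set P := pmf p c (c s1).
have -> : \sum_s2 p s1 * p s2 * ((c s2 == c s1)%:R / P) = p s1 * (P / P).
  rewrite [X in _ * (X / P)]pmfE mulr_suml mulr_sumr.
  by apply: eq_bigr => s2 _; ring.
by rewrite ler_piMr ?divff_le1.
Qed.

Lemma ent_submod : ent p abc + ent p c <= ent p ac + ent p bc.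
Proof.
have pointwise t :
    p t - p t * (pmf p ac (a t, c t) * pmf p bc (b t, c t) / D t) <=
    p t * ln (pmf p abc (a t, b t, c t)) + p t * ln (pmf p c (c t))
    - p t * ln (pmf p ac (a t, c t)) - p t * ln (pmf p bc (b t, c t)).
  have [->|ptn0] := eqVneq (p t) 0; first by rewrite !mul0r; lra.
  have pt : 0 < p t by rewrite lt_def ptn0 p_ge0.
  rewrite -{1}(mulr1 (p t)) -mulrBr -mulrDr -!mulrBr ler_wpM2l //.
  by apply: ln_ratio_ge; apply: pmf_gt0.
have := sum_cond_product_le.
have : \sum_t (p t - p t * (pmf p ac (a t, c t) * pmf p bc (b t, c t) / D t)) <=
  \sum_t (p t * ln (pmf p abc (a t, b t, c t)) + p t * ln (pmf p c (c t))
    - p t * ln (pmf p ac (a t, c t)) - p t * ln (pmf p bc (b t, c t))).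
  by apply: ler_sum => t _; exact: pointwise.
rewrite !(sumrB, big_split) /= !entE /=; lra.
Qed.

End Submodularity.

Section Normalized.
Hypothesis p_sum1 : \sum_t p t = 1.

Lemma ent_cst (U : eqType) (u : U) : ent p (fun=> u) = 0.
Proof.
rewrite entE big1 ?oppr0 // => t _.
rewrite pmfE; under eq_bigr => s _ do rewrite eqxx mul1r.
by rewrite p_sum1 ln1 mulr0.
Qed.

Lemma ent_subadd (U V : eqType) (a : T -> U) (b : T -> V) :
  ent p (fun t => (a t, b t)) <= ent p a + ent p b.
Proof.
have eab : ent p (fun t => (a t, b t, tt)) = ent p (fun t => (a t, b t)).
  by apply: eq_ent => s s'; split=> [[-> ->]|[-> ->]].
have ea : ent p (fun t => (a t, tt)) = ent p a.
  by apply: eq_ent => s s'; split=> [[->]|->].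
have eb : ent p (fun t => (b t, tt)) = ent p b.
  by apply: eq_ent => s s'; split=> [[->]|->].
by have := ent_submod a b (fun=> tt); rewrite ent_cst addr0 eab ea eb.
Qed.

Lemma minf_ge0 (U V : eqType) (a : T -> U) (b : T -> V) : 0 <= minf p a b.
Proof. by rewrite /minf subr_ge0 ent_subadd. Qed.

End Normalized.

End Entropy.

Lemma is_min_inf (R : realType) (S : set R) r : is_min S r -> inf S = r.
Proof.
move=> [Sr r_min]; apply/le_anti/andP; split.
  by apply: ge_inf => //; exists r => s /r_min.
by apply: lb_le_inf; [exists r | move=> s /r_min].
Qed.

Lemma is_max_sup (R : realType) (S : set R) r : is_max S r -> sup S = r.
Proof.
move=> [Sr r_max]; apply/le_anti/andP; split.
  by apply: ge_sup; [exists r | move=> s /r_max].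
by apply: ub_le_sup => //; exists r => s /r_max.
Qed.

Section Characterization.
Variables (R : realType) (TX TY : finType) (pXY : {ffun TX * TY -> R}).
Hypothesis pXY_dist : is_dist pXY.

Lemma condX_factor x y : pXY (x, y) = condX pXY y x * pY pXY y.
Proof.
rewrite /condX ffunE; have [pY0|/divfK -> //] := eqVneq (pY pXY y) 0.
rewrite pY0 mulr0; apply/le_anti; rewrite pXY_dist.1 andbT -pY0.
exact: (le_pmf pXY_dist.1 (fun t => t.2) (x, y)).
Qed.

Lemma markov_cond_fun (W : eqType) (h : TY -> W) :
  (forall y y', h y = h y' -> condX pXY y = condX pXY y') ->
  markov pXY (fun t => t.1) (fun t => h t.2) (fun t => t.2).
Proof.
move=> h_cond x z y.
have -> : pmf pXY (fun t => (t.1, h t.2, t.2)) (x, z, y) = (h y == z)%:R * pXY (x, y).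
  transitivity (pmf pXY (fun t => (t, h t.2)) ((x, y), z)).
    by apply: eq_pmf => -[x' y']; rewrite !xpair_eqE andbAC.
  by rewrite (pmf_pair_fun pXY id (fun t => h t.2)) pmf_id.
have -> : pmf pXY (fun t => (h t.2, t.2)) (z, y) = (h y == z)%:R * pY pXY y.
  transitivity (pmf pXY (fun t => (t.2, h t.2)) (y, z)).
    by apply: eq_pmf => t; rewrite !xpair_eqE andbC.
  exact: pmf_pair_fun.
have [<-|_] := eqP; last by rewrite !mul0r mulr0.
rewrite !mul1r (condX_factor x y) mulrAC; congr (_ * _).
rewrite (pmf_comp _ (fun t => t) (fun t => (t.1, h t.2))) /=.
rewrite (pmf_comp _ (fun t => t.2) h) mulr_sumr [RHS]sum_pair exchange_big /=.
apply: eq_bigr => y' _.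
under eq_bigr => x' _ do rewrite pmf_id xpair_eqE -mulnb natrM -mulrA [x' == x]eq_sym.
rewrite sum_eq_indicator; have [e|_] := eqP; last by rewrite !mul0r mulr0.
by rewrite condX_factor (h_cond _ _ e) mulrCA.
Qed.

Section Coupling.
Variables (TQ : finType) (p : {ffun TX * TY * TQ -> R}).
Hypothesis p_coupling : coupling pXY p.

Let p_ge0 : forall t, 0 <= p t. Proof. by case: p_coupling => -[]. Qed.

Lemma coupling_push : pXY = push p (@vXY TX TY TQ).
Proof. by apply/ffunP => xy; rewrite pushE p_coupling.2. Qed.

Lemma pmf_coupling (U : eqType) (G : TX * TY -> U) u :
  pmf p (fun t => G (vXY t)) u = pmf pXY G u.
Proof. by rewrite coupling_push pmf_push. Qed.

Lemma ent_coupling (U : eqType) (G : TX * TY -> U) :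
  ent p (fun t => G (vXY t)) = ent pXY G.
Proof. by rewrite coupling_push ent_push. Qed.

Section Chains.
Hypothesis X_Q_Y : markov p (@vX TX TY TQ) (@vQ TX TY TQ) (@vY TX TY TQ).
Hypothesis X_Y_Q : markov p (@vX TX TY TQ) (@vY TX TY TQ) (@vQ TX TY TQ).

Lemma condX_eq_cond_Q x s : 0 < p s ->
  condX pXY (vY s) x =
  pmf p (fun t => (vX t, vQ t)) (x, vQ s) / pmf p (@vQ TX TY TQ) (vQ s).
Proof.
move=> ps; rewrite -(markov_cond_eq p_ge0 x X_Q_Y X_Y_Q ps) ffunE.
congr (_ / _); last exact: esym (pmf_coupling (fun xy => xy.2) _).
rewrite -pmf_id -(pmf_coupling id); apply: eq_pmf => -[[x' y'] q].
by rewrite xpair_eqE.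
Qed.

Lemma QYX_determined_by_Q s s' : 0 < p s -> 0 < p s' -> vQ s = vQ s' ->
  QYX pXY (vXY s) = QYX pXY (vXY s').
Proof.
by move=> ps ps' e; apply/ffunP => x; rewrite !condX_eq_cond_Q // e.
Qed.

Lemma ent_QYX_le : ent pXY (QYX pXY) <= ent p (@vQ TX TY TQ).
Proof.
rewrite -ent_coupling; apply: ent_le_determined => // s s' ps ps' e.
exact: QYX_determined_by_Q.
Qed.

Lemma cent_QYX_ge :
  cent p (@vY TX TY TQ) (@vQ TX TY TQ) <= cent pXY (@rY TX TY) (QYX pXY).
Proof.
rewrite /cent -(ent_coupling (fun t => (rY t, QYX pXY t))) -ent_coupling /=.
set g := fun s => QYX pXY (vXY s).
have := ent_submod p_ge0 (@vY TX TY TQ) (@vQ TX TY TQ) g.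
have : ent p (fun s => (vY s, vQ s)) <= ent p (fun s => (vY s, vQ s, g s)).
  by apply: ent_le_determined => // s s' _ _ [-> ->].
have : ent p (fun s => (vQ s, g s)) <= ent p (@vQ TX TY TQ).
  apply: ent_le_determined => // s s' ps ps' e; rewrite e; congr pair.
  exact: QYX_determined_by_Q.
rewrite /g /rY /vY /=; lra.
Qed.

End Chains.
End Coupling.

(* Q_Y^X takes values in {ffun TX -> R}, which is not finite: its value is
   indexed by a representative in TY (the pick never fails). *)
Definition QYX_code (y : TY) : option TY :=
  [pick y' | condX pXY y' == condX pXY y].

Lemma QYX_code_eq y y' : QYX_code y = QYX_code y' <-> condX pXY y = condX pXY y'.
Proof.
rewrite /QYX_code; split=> [|->] //.
case: pickP => [z /eqP <-|/(_ y)]; last by rewrite eqxx.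
by case: pickP => [z' /eqP <- [->]|/(_ y')]; last by rewrite eqxx.
Qed.

Definition QYX_coupling : {ffun TX * TY * option TY -> R} :=
  push pXY (fun xy => (xy, QYX_code xy.2)).

Lemma coupling_QYX : coupling pXY QYX_coupling.
Proof.
split; first split.
- exact: (push_ge0 pXY_dist.1).
- by rewrite sum_push pXY_dist.2.
- by move=> xy; rewrite pmf_push pmf_id.
Qed.

Lemma markov_QYX_Q : markov QYX_coupling
  (@vX TX TY _) (@vQ TX TY _) (@vY TX TY _).
Proof. by apply/markov_push/markov_cond_fun => y y' /QYX_code_eq. Qed.

Lemma markov_QYX_Y : markov QYX_coupling
  (@vX TX TY _) (@vY TX TY _) (@vQ TX TY _).
Proof. exact/markov_push/markov_fun. Qed.

Lemma ent_QYX_code : ent QYX_coupling (@vQ TX TY _) = ent pXY (QYX pXY).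
Proof. by rewrite ent_push; apply: eq_ent => s s'; exact: QYX_code_eq. Qed.

Lemma cent_QYX_code :
  cent QYX_coupling (@vY TX TY _) (@vQ TX TY _) = cent pXY (@rY TX TY) (QYX pXY).
Proof.
rewrite /cent ent_QYX_code ent_push; congr (_ - _).
by apply: eq_ent => s s'; rewrite /vY /rY /QYX /=; split=> -[-> _].
Qed.

Lemma minf_QYX_code : minf QYX_coupling (@vXY TX TY _) (@vQ TX TY _) = ent pXY (QYX pXY).
Proof.
rewrite /minf ent_QYX_code !ent_push /=.
rewrite (@eq_ent _ _ _ _ _ (fun t => (t, QYX_code t.2)) id); last first.
  by move=> s s'; split=> [[]|->].
by rewrite addrAC subrr add0r.
Qed.

End Characterization.

Theorem theorem1 (R : realType) (TX TY : finType) (pXY : {ffun TX * TY -> R})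
  (hp : is_dist pXY) :
  (* (a) the min defining tilde C_W is attained and equals H(Q_Y^X) *)
  [/\ is_min (tC_set pXY) (ent pXY (QYX pXY)) /\ tCW pXY = ent pXY (QYX pXY),
  (* (b) the max defining tilde P_W is attained and equals H(Y|Q_Y^X) *)
      is_max (tP_set pXY) (cent pXY (@rY TX TY) (QYX pXY))
        /\ tPW pXY = cent pXY (@rY TX TY) (QYX pXY),
  (* (c) *)
      ent pXY (@rY TX TY) = tCW pXY + tPW pXY
        /\ tCW pXY + tPW pXY
           = ent pXY (QYX pXY) + cent pXY (@rY TX TY) (QYX pXY)
  & (* (d) *)
      CW pXY <= tCW pXY].
Proof.
have hc := coupling_QYX hp.
have XQY := markov_QYX_Q hp.
have XYQ := @markov_QYX_Y _ _ _ pXY.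
have C_min : is_min (tC_set pXY) (ent pXY (QYX pXY)).
  split; first by exists _, (QYX_coupling pXY); split; rewrite ?ent_QYX_code.
  by move=> _ [TQ [p [p_coupling m1 m2 ->]]]; exact: ent_QYX_le p_coupling m1 m2.
have P_max : is_max (tP_set pXY) (cent pXY (@rY TX TY) (QYX pXY)).
  split; first by exists _, (QYX_coupling pXY); split; rewrite ?cent_QYX_code.
  by move=> _ [TQ [p [p_coupling m1 m2 ->]]]; exact: cent_QYX_ge p_coupling m1 m2.
have ent_Y : ent pXY (@rY TX TY) = ent pXY (QYX pXY) + cent pXY (@rY TX TY) (QYX pXY).
  rewrite /cent (@eq_ent _ _ _ _ _ (fun t => (rY t, QYX pXY t)) (@rY TX TY)).
    by rewrite addrCA subrr addr0.
  by move=> s s'; rewrite /rY /QYX; split=> [[-> _]|->].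
have CW_le : CW pXY <= ent pXY (QYX pXY).
  rewrite -minf_QYX_code; apply: ge_inf.
    by exists 0 => _ [TQ [p [[[p_ge0 p_sum1] _] _ ->]]]; exact: minf_ge0.
  by exists _, (QYX_coupling pXY).
by rewrite /tCW /tPW (is_min_inf C_min) (is_max_sup P_max) -ent_Y.
Qed.
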